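(* Let $K$ be a finite simplicial complex, let $f\colon K\to\mathbb{R}$ be an injective filtration function, let $\sigma_1,\ldots,\sigma_k$ be $n$-dimensional simplices of $K$, and let $\pi\in S_k$ be an arbitrary permutation of $\{1,\ldots,k\}$. Assume that for some $\varepsilon>0$ we have $$f(\sigma_1)<f(\sigma_2)<\cdots<f(\sigma_k)<f(\sigma_1)+2\varepsilon.$$ Then there exists an injective filtration function $g$ on $K$ such that $\|f-g\|_\infty\le\varepsilon$ and $$g(\sigma_{\pi(1)})<g(\sigma_{\pi(2)})<\cdots<g(\sigma_{\pi(k)}).$$
   Context: A filtration function on a finite simplicial complex $K$ is a map $f\colon K\to\mathbb{R}$ such that $f(\sigma)\le f(\tau)$ whenever $\sigma$ is a face of $\tau$. For two functions $f,g\colon K\to\mathbb{R}$, $\|f-g\|_\infty=\max_{\sigma\in K}|f(\sigma)-g(\sigma)|$. *)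

From mathcomp Require Import all_boot all_order all_algebra all_fingroup.
From mathcomp Require Import reals.
Set Implicit Arguments. Unset Strict Implicit. Unset Printing Implicit Defensive.
Import Order.TTheory GRing.Theory Num.Theory.
Local Open Scope ring_scope.

Definition simplicial_complex (V : finType) (K : {set {set V}}) : Prop :=
  (forall s, s \in K -> s != set0) /\
  (forall s t : {set V}, s \in K -> t \subset s -> t != set0 -> t \in K).

Definition sdim (V : finType) (s : {set V}) : nat := #|s|.-1.

(* f : K -> R, represented as a function on vertex sets (values outside K
   are irrelevant). *)
Definition filtration (R : realType) (V : finType) (K : {set {set V}})
  (f : {set V} -> R) : Prop :=
  forall s t : {set V}, s \in K -> t \in K -> s \subset t -> f s <= f t.

Definition injective_on_K (R : realType) (V : finType) (K : {set {set V}})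
  (f : {set V} -> R) : Prop :=
  forall s t : {set V}, s \in K -> t \in K -> f s = f t -> s = t.

Definition sup_dist_le (R : realType) (V : finType) (K : {set {set V}})
  (f g : {set V} -> R) (e : R) : Prop :=
  forall s, s \in K -> `|f s - g s| <= e.

(* Put a = f(sigma_1) and b = f(sigma_k), and shrink [a, b] towards its ends
   by the factor t = (b - a) / (4 eps) < 1/2: simplices of dimension < n are
   pushed into [a, a + t(b - a)], the other simplices of dimension >= n into
   [b - t(b - a), b], and values outside [a, b] stay put.  The middle band is
   then free, and the sigma_i are placed there on an evenly spaced grid in the
   order prescribed by pi.  Both shrinking maps are strictly increasing, so the
   new function stays injective; faces of sigma_i have smaller dimension and
   land below the band, cofaces land above it, so it stays a filtration; and
   every value moves by at most (1 - t)(b - a) <= eps. *)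
From mathcomp Require Import all_boot all_order all_algebra all_fingroup.
From mathcomp Require Import reals lra.
Import Order.TTheory GRing.Theory Num.Theory.
Set Implicit Arguments. Unset Strict Implicit. Unset Printing Implicit Defensive.
Local Open Scope ring_scope.

Definition squeeze_down (R : realFieldType) (a b t x : R) : R :=
  if a <= x <= b then a + t * (x - a) else x.

Definition squeeze_up (R : realFieldType) (a b t x : R) : R :=
  if a <= x <= b then b - t * (b - x) else x.

Section Squeeze.
Variables (R : realFieldType) (a b t : R).

Variant squeeze_spec (x : R) : R -> R -> Type :=
  | SqueezeBelow of x < a : squeeze_spec x x x
  | SqueezeIn of a <= x & x <= b :
      squeeze_spec x (a + t * (x - a)) (b - t * (b - x))
  | SqueezeAbove of b < x : squeeze_spec x x x.

Lemma squeezeP x : squeeze_spec x (squeeze_down a b t x) (squeeze_up a b t x).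
Proof.
rewrite /squeeze_down /squeeze_up.
case: (lerP a x) => [ax|xa]; last exact: SqueezeBelow.
by case: (lerP x b) => [xb|bx]; [exact: SqueezeIn | exact: SqueezeAbove].
Qed.

Lemma squeeze_down_lt : 0 < t -> t <= 1 -> {homo squeeze_down a b t : x y / x < y}.
Proof. by move=> ? ? x y ?; case: (squeezeP x); case: (squeezeP y) => *; nra. Qed.

Lemma squeeze_up_lt : 0 < t -> t <= 1 -> {homo squeeze_up a b t : x y / x < y}.
Proof. by move=> ? ? x y ?; case: (squeezeP x); case: (squeezeP y) => *; nra. Qed.

Lemma squeeze_down_le x : t <= 1 -> squeeze_down a b t x <= x.
Proof. by move=> *; case: squeezeP => *; nra. Qed.

Lemma squeeze_up_ge x : t <= 1 -> x <= squeeze_up a b t x.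
Proof. by move=> *; case: squeezeP => *; nra. Qed.

Lemma squeeze_down_le_band x :
  a <= b -> 0 <= t -> x <= b -> squeeze_down a b t x <= a + t * (b - a).
Proof. by move=> *; case: squeezeP => *; nra. Qed.

Lemma squeeze_up_ge_band x :
  a <= b -> 0 <= t -> a <= x -> b - t * (b - a) <= squeeze_up a b t x.
Proof. by move=> *; case: squeezeP => *; nra. Qed.

Lemma squeeze_down_gt_band x : a <= b -> 0 <= t ->
  a + t * (b - a) < squeeze_down a b t x -> b < squeeze_down a b t x.
Proof. by move=> ? ?; case: squeezeP => *; nra. Qed.

Lemma squeeze_up_lt_band x : a <= b -> 0 <= t ->
  squeeze_up a b t x < b - t * (b - a) -> squeeze_up a b t x < a.
Proof. by move=> ? ?; case: squeezeP => *; nra. Qed.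

Lemma squeeze_down_eq_up x y : a < b -> 0 <= t -> 2 * t < 1 ->
  squeeze_down a b t x = squeeze_up a b t y -> x = y.
Proof. by move=> ? ? ?; case: (squeezeP x); case: (squeezeP y) => *; nra. Qed.

Lemma norm_sub_squeeze_down x :
  a <= b -> 0 <= t -> t <= 1 -> `|x - squeeze_down a b t x| <= (1 - t) * (b - a).
Proof.
by move=> *; rewrite ler_norml; case: squeezeP => *; apply/andP; split; nra.
Qed.

Lemma norm_sub_squeeze_up x :
  a <= b -> 0 <= t -> t <= 1 -> `|x - squeeze_up a b t x| <= (1 - t) * (b - a).
Proof.
by move=> *; rewrite ler_norml; case: squeezeP => *; apply/andP; split; nra.
Qed.

Definition squeeze (down : bool) : R -> R :=
  if down then squeeze_down a b t else squeeze_up a b t.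

Lemma squeeze_le (down down' : bool) x y : a <= b -> 0 < t -> t <= 1 ->
  down' ==> down -> x <= y -> squeeze down x <= squeeze down' y.
Proof.
move=> ab t0 t1 + xy; case: down; case: down' => //= _.
- by rewrite (le_mono (squeeze_down_lt t0 t1)).
- exact: le_trans (squeeze_down_le _ t1) (le_trans xy (squeeze_up_ge _ t1)).
- by rewrite (le_mono (squeeze_up_lt t0 t1)).
Qed.

Lemma squeeze_eq (down down' : bool) x y : a < b -> 0 < t -> 2 * t < 1 ->
  squeeze down x = squeeze down' y -> x = y.
Proof.
move=> ab t0 t_half; have t1 : t <= 1 by lra.
case: down; case: down' => /=.
- exact/inc_inj/le_mono/squeeze_down_lt.
- exact: squeeze_down_eq_up (ltW t0) t_half.
- by move/esym/(squeeze_down_eq_up ab (ltW t0) t_half)/esym.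
- exact/inc_inj/le_mono/squeeze_up_lt.
Qed.

Lemma squeeze_gt_band (down : bool) x : a <= b -> 0 <= t ->
  a + t * (b - a) < squeeze down x -> b - t * (b - a) <= squeeze down x.
Proof.
move=> ab t0; case: down => /= lo_lt.
  by have := squeeze_down_gt_band ab t0 lo_lt; nra.
rewrite leNgt; apply/negP => /(squeeze_up_lt_band ab t0); nra.
Qed.

Lemma norm_sub_squeeze (down : bool) x : a <= b -> 0 <= t -> t <= 1 ->
  `|x - squeeze down x| <= (1 - t) * (b - a).
Proof. by case: down; [exact: norm_sub_squeeze_down | exact: norm_sub_squeeze_up]. Qed.

End Squeeze.

Definition grid_point (R : realFieldType) (lo hi : R) (k j : nat) : R :=
  lo + (hi - lo) * (j.+1%:R / k.+1%:R).

Section GridPoint.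
Variables (R : realFieldType) (lo hi : R) (k : nat).

Lemma grid_point_lt : lo < hi -> {homo grid_point lo hi k : i j / (i < j)%N >-> i < j}.
Proof.
move=> lt_lo_hi i j ij; rewrite ltrD2l ltr_pM2l ?subr_gt0 //.
by rewrite ltr_pM2r ?invr_gt0 ?ltr0n // ltr_nat.
Qed.

Lemma grid_point_gt_lo j : lo < hi -> lo < grid_point lo hi k j.
Proof.
move=> lt_lo_hi; rewrite ltrDl mulr_gt0 ?subr_gt0 //.
by rewrite divr_gt0 ?ltr0n.
Qed.

Lemma grid_point_lt_hi j : lo < hi -> (j < k)%N -> grid_point lo hi k j < hi.
Proof.
move=> lt_lo_hi jk; rewrite -ltrBrDl gtr_pMr ?subr_gt0 //.
by rewrite ltr_pdivrMr ?ltr0n // mul1r ltr_nat.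
Qed.

End GridPoint.

Section Reorder.
Variables (R : realType) (V : finType) (K : {set {set V}}) (f : {set V} -> R).
Variables (n k : nat) (sigma : 'I_k -> {set V}) (pi : 'S_k) (a b t : R).
Hypotheses (f_filt : filtration K f) (f_inj : injective_on_K K f).
Hypotheses (sigma_inj : injective sigma).
Hypotheses (card_sigma : forall i, #|sigma i| = n.+1).
Hypotheses (f_sigma : forall i, a <= f (sigma i) <= b).
Hypotheses (lt_ab : a < b) (t_gt0 : 0 < t) (t_lt_half : 2 * t < 1).

Local Notation lo := (a + t * (b - a)).
Local Notation hi := (b - t * (b - a)).

Let le_ab : a <= b := ltW lt_ab.
Let t_ge0 : 0 <= t := ltW t_gt0.
Let t_le1 : t <= 1. Proof. by have := t_lt_half; have := t_gt0; lra. Qed.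

Definition reorder (s : {set V}) : R :=
  if [pick i | s == sigma i] is Some i then grid_point lo hi k (pi^-1 i)%g
  else squeeze a b t (#|s| <= n)%N (f s).

Variant reorder_spec (s : {set V}) : R -> Type :=
  | ReorderSigma i of s = sigma i : reorder_spec s (grid_point lo hi k (pi^-1 i)%g)
  | ReorderOther of (forall i, s != sigma i) :
      reorder_spec s (squeeze a b t (#|s| <= n)%N (f s)).

Lemma reorderP s : reorder_spec s (reorder s).
Proof.
rewrite /reorder; case: pickP => [i /eqP -> | not_sigma]; first exact: ReorderSigma.
by apply: ReorderOther => i; rewrite not_sigma.
Qed.

Lemma reorder_sigma i : reorder (sigma i) = grid_point lo hi k (pi^-1 i)%g.
Proof. by case: reorderP => [j /sigma_inj -> // | /(_ i)]; rewrite eqxx. Qed.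

Lemma lo_lt_hi : lo < hi.
Proof. by have := lt_ab; have := t_lt_half; nra. Qed.

Lemma grid_in_band (j : 'I_k) : lo < grid_point lo hi k j < hi.
Proof. by rewrite grid_point_gt_lo ?grid_point_lt_hi ?lo_lt_hi. Qed.

Lemma grid_neq_squeeze (j : 'I_k) (down : bool) x :
  grid_point lo hi k j != squeeze a b t down x.
Proof.
have /andP[lo_lt_grid grid_lt_hi] := grid_in_band j.
apply/eqP => grid_eq; rewrite grid_eq in lo_lt_grid grid_lt_hi.
by have := squeeze_gt_band le_ab t_ge0 lo_lt_grid; rewrite leNgt grid_lt_hi.
Qed.

Lemma reorder_filtration : filtration K reorder.
Proof.
move=> s s'; case: (reorderP s) => [i -> | s_other];
  case: (reorderP s') => [j -> | s'_other] sK s'K sub; have f_le := f_filt sK s'K sub.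
- by have -> : i = j by apply/sigma_inj/eqP; rewrite eqEcard sub !card_sigma leqnn.
- have s'_high : (#|s'| <= n)%N = false.
    by apply/negbTE; rewrite -ltnNge -(card_sigma i) subset_leq_card.
  rewrite s'_high /=; have /andP[_ /ltW grid_le_hi] := grid_in_band (pi^-1 i)%g.
  apply: le_trans grid_le_hi (squeeze_up_ge_band le_ab t_ge0 _).
  by have /andP[a_le _] := f_sigma i; apply: le_trans a_le f_le.
- have s_low : (#|s| <= n)%N.
    by rewrite -ltnS -(card_sigma j) (ltn_leqif (subset_leqif_cards sub)) s_other.
  rewrite s_low /=; have /andP[lo_lt_grid _] := grid_in_band (pi^-1 j)%g.
  apply: le_trans (squeeze_down_le_band le_ab t_ge0 _) (ltW lo_lt_grid).
  by have /andP[_ le_b] := f_sigma j; apply: le_trans f_le le_b.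
- by apply: squeeze_le => //; apply/implyP => /(leq_trans (subset_leq_card sub)).
Qed.

Lemma reorder_inj : injective_on_K K reorder.
Proof.
move=> s s' sK s'K; case: (reorderP s) => [i -> | s_other];
  case: (reorderP s') => [j -> | s'_other].
- by move/(inc_inj (le_mono (grid_point_lt k lo_lt_hi)))/val_inj/perm_inj ->.
- by move/eqP; rewrite (negbTE (grid_neq_squeeze _ _ _)).
- by move/eqP; rewrite eq_sym (negbTE (grid_neq_squeeze _ _ _)).
- by move/(squeeze_eq lt_ab t_gt0 t_lt_half)/f_inj; apply.
Qed.

Lemma reorder_dist : sup_dist_le K f reorder ((1 - t) * (b - a)).
Proof.
move=> s _; case: reorderP => [i -> | _]; last exact: norm_sub_squeeze.
have := f_sigma i; have := grid_in_band (pi^-1 i)%g.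
by rewrite ler_norml => /andP[? ?] /andP[? ?]; apply/andP; split; lra.
Qed.

Lemma reorder_sigma_perm_lt (i j : 'I_k) :
  (i < j)%N -> reorder (sigma (pi i)) < reorder (sigma (pi j)).
Proof. by move=> ij; rewrite !reorder_sigma !permK; exact: grid_point_lt lo_lt_hi _ _ ij. Qed.

End Reorder.

Lemma shrink_factor_bounds (R : realFieldType) (d e : R) : 0 < d -> d < 2 * e ->
  [/\ 0 < d / (4 * e), 2 * (d / (4 * e)) < 1 & (1 - d / (4 * e)) * d <= e].
Proof.
move=> d_gt0 d_lt; have e_gt0 : 0 < e by lra.
have tE : d / (4 * e) * (4 * e) = d by rewrite divfK // mulf_neq0 // gt_eqF.
(* after scaling by 4e, the last bound reads (2e - d)^2 >= 0 *)
split; nra.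
Qed.

Theorem corollary2p2 (R : realType) (V : finType) (K : {set {set V}})
  (f : {set V} -> R) (n k : nat) (sigma : 'I_k -> {set V}) (pi : 'S_k)
  (eps : R) :
  simplicial_complex K ->
  filtration K f -> injective_on_K K f ->
  (forall i, sigma i \in K) ->
  (forall i, sdim (sigma i) = n) ->
  0 < eps ->
  (forall i j : 'I_k, (i < j)%N -> f (sigma i) < f (sigma j)) ->
  (forall i j : 'I_k, nat_of_ord i = 0%N -> nat_of_ord j = k.-1 ->
     f (sigma j) < f (sigma i) + 2 * eps) ->
  exists g : {set V} -> R,
    [/\ filtration K g, injective_on_K K g, sup_dist_le K f g eps &
        forall i j : 'I_k, (i < j)%N -> g (sigma (pi i)) < g (sigma (pi j))].
Proof.
move=> [K_nonempty _] f_filt f_inj sigmaK sigma_dim eps_gt0 f_sigma_lt f_sigma_span.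
case: k => [|[|k]] in sigma pi sigmaK sigma_dim f_sigma_lt f_sigma_span *.
1,2: exists f; split=> // [s _ | i j]; first by rewrite subrr normr0 ltW.
1,2: by [case: i | rewrite !ord1].
have sigma_inj : injective sigma.
  exact/(inj_compr (f := f))/inc_inj/le_mono => i j; apply: f_sigma_lt.
have card_sigma i : #|sigma i| = n.+1.
  by rewrite -(sigma_dim i) /sdim prednK // card_gt0 K_nonempty ?sigmaK.
set a := f (sigma ord0); set b := f (sigma ord_max).
have f_sigma i : a <= f (sigma i) <= b.
  by rewrite !(le_mono f_sigma_lt) !leEord leq_ord.
have lt_ab : a < b by apply: f_sigma_lt.
have span_gt0 : 0 < b - a by rewrite subr_gt0.
have span_lt : b - a < 2 * eps.
  by have := f_sigma_span ord0 ord_max erefl erefl; rewrite -/a -/b; lra.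
have [t_gt0 t_lt_half shrink_le] := shrink_factor_bounds span_gt0 span_lt.
exists (reorder f n sigma pi a b ((b - a) / (4 * eps))); split.
- exact: reorder_filtration.
- exact: reorder_inj.
- by move=> s sK; apply: le_trans shrink_le; apply: reorder_dist.
- exact: reorder_sigma_perm_lt.
Qed.
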